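(* Let $n_0\in C^1(\Omega,\mathbb S^2)$ with $n_0\ne-e_3$, and suppose $n_0$ is conformal. Let $\rho_0=-B_0^{-1}b_0$ with $B_0,b_0$ as in the context. Then $\rho_0\cdot e_1=\rho_0\cdot e_2=0$ (so $R_{n_0}V_{\rho_0}R_{n_0}^t$ is a multiple of $n_0\otimes n_0-\frac13I$, i.e. no biaxiality at this order), and $$\int_\Omega\tfrac12B_0\rho_0\cdot\rho_0+b_0\cdot\rho_0=-\frac{3s_+^2}{\nu}\int_\Omega|\nabla n_0|^4.$$
   Context: $a,b,c>0$, $s_+=\frac{b^2+\sqrt{b^4+24a^2c^2}}{4c^2}$, $\mu=b^2s_+$, $\nu=\frac13b^2s_++2a^2$, $B_0=\mathrm{diag}(\mu,\mu,\nu)$. $F_1=\frac1{\sqrt2}(e_1\otimes e_1-e_2\otimes e_2)$, $F_2=\frac1{\sqrt2}(e_1\otimes e_2+e_2\otimes e_1)$, $F_3=\sqrt{\frac32}(e_3\otimes e_3-\frac13I)$; $V_\rho=\sum_{j=1}^3\rho_jF_j$. For $n\ne-e_3$, $R_n=I+[e_3\times n]_\times+\frac{[e_3\times n]_\times^2}{1+n\cdot e_3}$ with $[\omega]_\times v=\omega\times v$. $\nabla n\otimes\nabla n=\sum_{i=1}^2\partial_in\otimes\partial_in$, and $b_0\cdot e_j=-2s_+(\nabla n_0\otimes\nabla n_0):(R_{n_0}F_jR_{n_0}^t)$ for $j=1,2$, $b_0\cdot e_3=\sqrt6\,s_+|\nabla n_0|^2$, with $A:B=\mathrm{tr}(A^tB)$.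 $n$ is conformal if $\partial_2n=\sigma\,n\times\partial_1n$ with $\sigma\equiv\pm1$ constant; $\Omega\subset\mathbb R^2$ bounded and $|\nabla n_0|\in L^4(\Omega)$. *)

From Stdlib Require Import Reals Lra.
Open Scope R_scope.

(* Vectors of R^3 and 3x3 matrices, indexed by 0,1,2 (component k <-> e_{k+1}). *)
Definition vec := nat -> R.
Definition mat := nat -> nat -> R.

Definition sum3 (f : nat -> R) : R := f 0%nat + f 1%nat + f 2%nat.

Definition vdot (u v : vec) : R := sum3 (fun i => u i * v i).
Definition vnorm2 (u : vec) : R := vdot u u.

Definition e (i : nat) : vec := fun k => if Nat.eqb k i then 1 else 0.
Definition e1 : vec := e 0.
Definition e2 : vec := e 1.
Definition e3 : vec := e 2.

Definition cross (u v : vec) : vec := fun k =>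
  match k with
  | 0%nat => u 1%nat * v 2%nat - u 2%nat * v 1%nat
  | 1%nat => u 2%nat * v 0%nat - u 0%nat * v 2%nat
  | 2%nat => u 0%nat * v 1%nat - u 1%nat * v 0%nat
  | _ => 0
  end.

Definition Idm : mat := fun i j => if Nat.eqb i j then 1 else 0.
Definition madd (A B : mat) : mat := fun i j => A i j + B i j.
Definition mscale (c : R) (A : mat) : mat := fun i j => c * A i j.
Definition mmul (A B : mat) : mat := fun i j => sum3 (fun k => A i k * B k j).
Definition mtr (A : mat) : mat := fun i j => A j i.
Definition outer (u v : vec) : mat := fun i j => u i * v j.
Definition mvec (A : mat) (v : vec) : vec := fun i => sum3 (fun k => A i k * v k).
Definition frob (A B : mat) : R := sum3 (fun i => sum3 (fun j => A i j * B i j)).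

(* [w]_x, the matrix with [w]_x v = w x v (column j is w x e_j) *)
Definition skew (w : vec) : mat := fun i j => cross w (e j) i.

Definition Rn (n : vec) : mat :=
  madd (madd Idm (skew (cross e3 n)))
       (mscale (/ (1 + vdot n e3)) (mmul (skew (cross e3 n)) (skew (cross e3 n)))).

Definition F1 : mat := mscale (/ sqrt 2) (madd (outer e1 e1) (mscale (-1) (outer e2 e2))).
Definition F2 : mat := mscale (/ sqrt 2) (madd (outer e1 e2) (outer e2 e1)).
Definition F3 : mat := mscale (sqrt (3 / 2)) (madd (outer e3 e3) (mscale (- (1 / 3)) Idm)).

Definition Fj (j : nat) : mat :=
  match j with 0%nat => F1 | 1%nat => F2 | _ => F3 end.

Definition Vrho (rho : vec) : mat := fun i j => sum3 (fun k => rho k * Fj k i j).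

Definition splus (a b c : R) : R := (b ^ 2 + sqrt (b ^ 4 + 24 * a ^ 2 * c ^ 2)) / (4 * c ^ 2).
Definition mu (a b c : R) : R := b ^ 2 * splus a b c.
Definition nu (a b c : R) : R := 1 / 3 * b ^ 2 * splus a b c + 2 * a ^ 2.

Definition B0 (a b c : R) : mat := fun i j =>
  if Nat.eqb i j then
    match i with 0%nat => mu a b c | 1%nat => mu a b c | _ => nu a b c end
  else 0.

(* grad n given by its two partial derivatives d1 = d_1 n, d2 = d_2 n *)
Definition gradnorm2 (d1 d2 : vec) : R := vnorm2 d1 + vnorm2 d2.
Definition gradtensor (d1 d2 : vec) : mat := madd (outer d1 d1) (outer d2 d2).

(* b_0 at a point, for s = s_+, n = n_0, d1,d2 = partial derivatives of n_0 *)
Definition b0vec (s : R) (n d1 d2 : vec) : vec := fun k =>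
  match k with
  | 0%nat => -2 * s * frob (gradtensor d1 d2) (mmul (mmul (Rn n) F1) (mtr (Rn n)))
  | 1%nat => -2 * s * frob (gradtensor d1 d2) (mmul (mmul (Rn n) F2) (mtr (Rn n)))
  | 2%nat => sqrt 6 * s * gradnorm2 d1 d2
  | _ => 0
  end.

Definition open2 (Om : R -> R -> Prop) : Prop :=
  forall x y, Om x y -> exists r, r > 0 /\
    forall x' y', (x' - x) ^ 2 + (y' - y) ^ 2 < r ^ 2 -> Om x' y'.

Definition bounded2 (Om : R -> R -> Prop) : Prop :=
  exists M, forall x y, Om x y -> x ^ 2 + y ^ 2 <= M.

Definition cont2_on (Om : R -> R -> Prop) (f : R -> R -> R) : Prop :=
  forall x y, Om x y -> forall eps, eps > 0 -> exists delta, delta > 0 /\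
    forall x' y', Om x' y' -> (x' - x) ^ 2 + (y' - y) ^ 2 < delta ^ 2 ->
      Rabs (f x' y' - f x y) < eps.

Definition C1_S2_on (Om : R -> R -> Prop) (n d1 d2 : R -> R -> vec) : Prop :=
  (forall x y, Om x y -> vnorm2 (n x y) = 1) /\
  forall k, (k < 3)%nat ->
    cont2_on Om (fun x y => n x y k) /\
    cont2_on Om (fun x y => d1 x y k) /\
    cont2_on Om (fun x y => d2 x y k) /\
    (forall x y, Om x y ->
       derivable_pt_lim (fun t => n t y k) x (d1 x y k) /\
       derivable_pt_lim (fun t => n x t k) y (d2 x y k)).

Definition conformal (Om : R -> R -> Prop) (n d1 d2 : R -> R -> vec) : Prop :=
  exists sigma, (sigma = 1 \/ sigma = -1) /\
    forall x y, Om x y -> forall k, (k < 3)%nat ->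
      d2 x y k = sigma * cross (n x y) (d1 x y) k.

(* Abstract integral over Omega: a functional I on an integrable class,
   local (depends only on values on Omega) and homogeneous on integrable
   functions.  The Lebesgue integral over Omega on L^1(Omega) is an instance. *)
Definition IsIntegralOn (Om : R -> R -> Prop)
    (Integrable : (R -> R -> R) -> Prop) (I : (R -> R -> R) -> R) : Prop :=
  (forall f g, (forall x y, Om x y -> f x y = g x y) ->
      (Integrable f -> Integrable g) /\ I f = I g) /\
  (forall (cst : R) f, Integrable f ->
      Integrable (fun x y => cst * f x y) /\ I (fun x y => cst * f x y) = cst * I f).

From Stdlib Require Import Reals Lra Lia.
Open Scope R_scope.

(* Pointwise, the theorem is a statement about the critical point rho0 of the
   quadratic rho |-> 1/2 B0 rho.rho + b0.rho, and everything reduces to one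
   geometric fact: for a conformal map, d2 n = sigma n x d1 n, the transverse
   components b0.e1 and b0.e2 vanish.  Indeed, by cyclicity of the trace,
   (d1 (x) d1 + d2 (x) d2) : R F_j R^t equals (w (x) w + w' (x) w') : F_j with
   w = R^t d1 and w' = R^t d2 = sigma e3 x w (R_n is a rotation sending e3 to n),
   and this vanishes for j = 1, 2 by a two-line computation.  With b0.e1 = b0.e2 = 0 the diagonal system
   B0 rho0 = -b0 gives rho0 = (0, 0, -sqrt 6 s+ |grad n0|^2 / nu), hence the
   uniaxial form of R V_rho0 R^t, and the energy density at a critical point is
   1/2 b0.rho0 = -3 s+^2 |grad n0|^4 / nu.  The integral identity then follows
   from the locality and homogeneity of the integral. *)

Lemma frob_gradtensor_conj (R M : mat) (d1 d2 : vec) :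
  frob (gradtensor d1 d2) (mmul (mmul R M) (mtr R))
  = frob (gradtensor (mvec (mtr R) d1) (mvec (mtr R) d2)) M.
Proof.
  cbv [frob gradtensor madd outer mmul mtr mvec sum3]; ring.
Qed.

(* In the frame where n = e3, a conformal pair (w, sigma e3 x w) has zero
   F1- and F2-components: w1^2 - w2^2 and w1 w2 cancel against those of e3 x w. *)
Lemma frob_gradtensor_F_transverse (j : nat) (sigma : R) (w w' : vec) :
  (j < 2)%nat -> (sigma = 1 \/ sigma = -1) ->
  (forall k, (k < 3)%nat -> w' k = sigma * cross e3 w k) ->
  frob (gradtensor w w') (Fj j) = 0.
Proof.
  intros hj hsigma hw'.
  assert (j = 0%nat \/ j = 1%nat) as [-> | ->] by lia;
  cbv [frob gradtensor madd mscale outer Fj F1 F2 e1 e2 e sum3 Nat.eqb];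
  rewrite (hw' 0%nat), (hw' 1%nat), (hw' 2%nat) by lia;
  cbv [cross e3 e Nat.eqb];
  destruct hsigma as [-> | ->]; ring.
Qed.

Lemma conj_Vrho_axial (R : mat) (rho : vec) (i j : nat) :
  rho 0%nat = 0 -> rho 1%nat = 0 ->
  mmul (mmul R (Vrho rho)) (mtr R) i j
  = rho 2%nat * sqrt (3 / 2) * (R i 2%nat * R j 2%nat - 1 / 3 * mmul R (mtr R) i j).
Proof.
  intros h0 h1.
  cbv [mmul mtr Vrho Fj F1 F2 F3 madd mscale outer Idm e1 e2 e3 e sum3 Nat.eqb].
  rewrite h0, h1; ring.
Qed.

Lemma quadratic_at_critical_point (B : mat) (beta rho : vec) :
  (forall i, (i < 3)%nat -> mvec B rho i = - beta i) ->
  1 / 2 * vdot (mvec B rho) rho + vdot beta rho = 1 / 2 * vdot beta rho.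
Proof.
  intros hcrit. unfold vdot, sum3. rewrite !hcrit by lia. lra.
Qed.

Lemma B0_diagonal (a b c : R) (rho : vec) :
  mvec (B0 a b c) rho 0%nat = mu a b c * rho 0%nat /\
  mvec (B0 a b c) rho 1%nat = mu a b c * rho 1%nat /\
  mvec (B0 a b c) rho 2%nat = nu a b c * rho 2%nat.
Proof. cbv [mvec sum3 B0 Nat.eqb]; repeat split; ring. Qed.

Lemma splus_pos (a b c : R) : 0 < b -> 0 < c -> 0 < splus a b c.
Proof.
  intros hb hc. unfold splus. apply Rdiv_lt_0_compat.
  - apply Rplus_lt_le_0_compat; [apply pow_lt; lra | apply sqrt_pos].
  - apply Rmult_lt_0_compat; [lra | apply pow_lt; lra].
Qed.

Lemma mu_pos (a b c : R) : 0 < b -> 0 < c -> 0 < mu a b c.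
Proof.
  intros hb hc. unfold mu. apply Rmult_lt_0_compat; [apply pow_lt; lra | now apply splus_pos].
Qed.

Lemma nu_pos (a b c : R) : 0 < a -> 0 < b -> 0 < c -> 0 < nu a b c.
Proof.
  intros ha hb hc. unfold nu.
  pose proof (splus_pos a b c hb hc). pose proof (pow_lt a 2 ha). pose proof (pow_lt b 2 hb).
  nra.
Qed.

(* Inverse stereographic projection from -e3: (u, v) |-> the unit vector
   (2u, 2v, 1 - u^2 - v^2) / (1 + u^2 + v^2). *)
Definition stereo (u v : R) : vec := fun k =>
  match k with
  | 0%nat => 2 * u / (1 + u ^ 2 + v ^ 2)
  | 1%nat => 2 * v / (1 + u ^ 2 + v ^ 2)
  | _ => (1 - u ^ 2 - v ^ 2) / (1 + u ^ 2 + v ^ 2)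
  end.

(* Every unit vector other than -e3 has stereographic coordinates
   u = n1 / (1 + n3), v = n2 / (1 + n3). *)
Lemma unit_vector_stereo (n : vec) :
  vnorm2 n = 1 -> ~ (forall k, (k < 3)%nat -> n k = - e3 k) ->
  exists u v, forall k, (k < 3)%nat -> n k = stereo u v k.
Proof.
  intros hn hne. cbv [vnorm2 vdot sum3] in hn.
  set (x := n 0%nat) in *; set (y := n 1%nat) in *; set (z := n 2%nat) in *.
  assert (hz : 1 + z <> 0).
  { intro hz. apply hne. intros k hk.
    assert (x = 0 /\ y = 0) as [hx hy] by (split; nra).
    assert (k = 0%nat \/ k = 1%nat \/ k = 2%nat) as [-> | [-> | ->]] by lia;
      cbv [e3 e Nat.eqb]; fold x y z; lra. }
  exists (x / (1 + z)), (y / (1 + z)).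
  assert (hD : 1 + (x / (1 + z)) ^ 2 + (y / (1 + z)) ^ 2 = 2 / (1 + z)).
  { replace (2 / (1 + z)) with (((1 + z) ^ 2 + x ^ 2 + y ^ 2) / (1 + z) ^ 2)
      by (field_simplify_eq; [nra | auto]).
    field; auto. }
  intros k hk. unfold stereo.
  replace (1 - (x / (1 + z)) ^ 2 - (y / (1 + z)) ^ 2) with (2 - 2 / (1 + z)) by lra.
  rewrite hD.
  assert (k = 0%nat \/ k = 1%nat \/ k = 2%nat) as [-> | [-> | ->]] by lia;
    fold x y z; field; auto.
Qed.

(* The rotation R_n written in stereographic coordinates. *)
Definition Rstereo (u v : R) : mat := fun i j =>
  let D := 1 + u ^ 2 + v ^ 2 in
  match i, j with
  | 0%nat, 0%nat => 1 - 2 * u ^ 2 / D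
  | 0%nat, 1%nat => - (2 * u * v / D)
  | 0%nat, _ => 2 * u / D
  | 1%nat, 0%nat => - (2 * u * v / D)
  | 1%nat, 1%nat => 1 - 2 * v ^ 2 / D
  | 1%nat, _ => 2 * v / D
  | _, 0%nat => - (2 * u / D)
  | _, 1%nat => - (2 * v / D)
  | _, _ => (1 - u ^ 2 - v ^ 2) / D
  end.

Section StereographicFrame.
Variables (u v : R) (n : vec).
Hypothesis hn : forall k, (k < 3)%nat -> n k = stereo u v k.

Lemma stereo_denom_pos : 0 < 1 + u ^ 2 + v ^ 2.
Proof. nra. Qed.

(* Closed form of R_n: at n = stereo u v one has 1 + n.e3 = 2 / (1 + u^2 + v^2). *)
Lemma Rn_stereo (i j : nat) : (i < 3)%nat -> (j < 3)%nat -> Rn n i j = Rstereo u v i j.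
Proof.
  intros hi hj.
  pose proof stereo_denom_pos.
  cbv [Rn madd mscale mmul skew sum3 cross vdot Idm e3 e Nat.eqb].
  rewrite !hn by lia. unfold stereo.
  assert (i = 0%nat \/ i = 1%nat \/ i = 2%nat) as [-> | [-> | ->]] by lia;
  assert (j = 0%nat \/ j = 1%nat \/ j = 2%nat) as [-> | [-> | ->]] by lia;
  simpl; field; nra.
Qed.

Lemma Rn_orthogonal (i j : nat) : (i < 3)%nat -> (j < 3)%nat ->
  mmul (Rn n) (mtr (Rn n)) i j = Idm i j.
Proof.
  intros hi hj. pose proof stereo_denom_pos.
  unfold mmul, mtr, sum3. rewrite !Rn_stereo by lia.
  assert (i = 0%nat \/ i = 1%nat \/ i = 2%nat) as [-> | [-> | ->]] by lia;
  assert (j = 0%nat \/ j = 1%nat \/ j = 2%nat) as [-> | [-> | ->]] by lia;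
  cbv [Rstereo Idm Nat.eqb]; field; lra.
Qed.

Lemma Rn_e3_column (i : nat) : (i < 3)%nat -> Rn n i 2%nat = n i.
Proof.
  intros hi. rewrite Rn_stereo, hn by lia.
  assert (i = 0%nat \/ i = 1%nat \/ i = 2%nat) as [-> | [-> | ->]] by lia; reflexivity.
Qed.

(* R_n^t is a rotation sending n to e3, so R_n^t (n x d) = e3 x (R_n^t d). *)
Lemma Rn_transpose_cross (d : vec) (k : nat) : (k < 3)%nat ->
  mvec (mtr (Rn n)) (cross n d) k = cross e3 (mvec (mtr (Rn n)) d) k.
Proof.
  intros hk. pose proof stereo_denom_pos.
  assert (k = 0%nat \/ k = 1%nat \/ k = 2%nat) as [-> | [-> | ->]] by lia;
  cbv [mvec mtr sum3 cross e3 e Nat.eqb];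
  rewrite !Rn_stereo, !hn by lia; cbv [Rstereo stereo]; field; lra.
Qed.

Lemma frob_gradtensor_conformal (j : nat) (sigma : R) (d1 d2 : vec) :
  (j < 2)%nat -> (sigma = 1 \/ sigma = -1) ->
  (forall k, (k < 3)%nat -> d2 k = sigma * cross n d1 k) ->
  frob (gradtensor d1 d2) (mmul (mmul (Rn n) (Fj j)) (mtr (Rn n))) = 0.
Proof.
  intros hj hsigma hd.
  rewrite frob_gradtensor_conj.
  apply (frob_gradtensor_F_transverse j sigma); [exact hj | exact hsigma |].
  intros k hk. rewrite <- Rn_transpose_cross by exact hk.
  unfold mvec, sum3, mtr. rewrite (hd 0%nat), (hd 1%nat), (hd 2%nat) by lia. ring.
Qed.

End StereographicFrame.

Section CriticalPoint.
Variables (a b c : R) (n d1 d2 rho : vec) (sigma : R).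
Hypotheses (ha : 0 < a) (hb : 0 < b) (hc : 0 < c).
Hypothesis hunit : vnorm2 n = 1.
Hypothesis hne : ~ (forall k, (k < 3)%nat -> n k = - e3 k).
Hypothesis hsigma : sigma = 1 \/ sigma = -1.
Hypothesis hconf : forall k, (k < 3)%nat -> d2 k = sigma * cross n d1 k.
Hypothesis hcrit : forall i, (i < 3)%nat ->
  mvec (B0 a b c) rho i = - b0vec (splus a b c) n d1 d2 i.

Lemma b0_transverse_zero :
  b0vec (splus a b c) n d1 d2 0%nat = 0 /\ b0vec (splus a b c) n d1 d2 1%nat = 0.
Proof.
  destruct (unit_vector_stereo n hunit hne) as (u & v & hn).
  cbv [b0vec]. split.
  - rewrite (frob_gradtensor_conformal u v n hn 0 sigma) by (auto || lia). ring.
  - rewrite (frob_gradtensor_conformal u v n hn 1 sigma) by (auto || lia). ring.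
Qed.

Lemma critical_rho :
  rho 0%nat = 0 /\ rho 1%nat = 0 /\
  rho 2%nat = - (sqrt 6 * splus a b c * gradnorm2 d1 d2) / nu a b c.
Proof.
  pose proof (mu_pos a b c hb hc). pose proof (nu_pos a b c ha hb hc).
  destruct b0_transverse_zero as [hb0 hb1].
  destruct (B0_diagonal a b c rho) as (hB0 & hB1 & hB2).
  pose proof (hcrit 0%nat ltac:(lia)) as h0.
  pose proof (hcrit 1%nat ltac:(lia)) as h1.
  pose proof (hcrit 2%nat ltac:(lia)) as h2.
  rewrite hB0, hb0 in h0. rewrite hB1, hb1 in h1. rewrite hB2 in h2. cbv [b0vec] in h2.
  repeat split.
  - apply (Rmult_eq_reg_l (mu a b c)); lra.
  - apply (Rmult_eq_reg_l (mu a b c)); lra.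
  - apply (Rmult_eq_reg_l (nu a b c)); [rewrite h2; field |]; lra.
Qed.

Lemma critical_uniaxial :
  exists lam, forall i j, (i < 3)%nat -> (j < 3)%nat ->
    mmul (mmul (Rn n) (Vrho rho)) (mtr (Rn n)) i j
    = lam * (outer n n i j - 1 / 3 * Idm i j).
Proof.
  destruct (unit_vector_stereo n hunit hne) as (u & v & hn).
  destruct critical_rho as (h0 & h1 & _).
  exists (rho 2%nat * sqrt (3 / 2)). intros i j hi hj.
  rewrite conj_Vrho_axial by assumption.
  rewrite (Rn_e3_column u v n hn i hi), (Rn_e3_column u v n hn j hj).
  rewrite (Rn_orthogonal u v n hn i j hi hj). reflexivity.
Qed.

Lemma critical_energy :
  1 / 2 * vdot (mvec (B0 a b c) rho) rho + vdot (b0vec (splus a b c) n d1 d2) rho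
  = - (3 * splus a b c ^ 2 / nu a b c) * gradnorm2 d1 d2 ^ 2.
Proof.
  pose proof (nu_pos a b c ha hb hc).
  rewrite quadratic_at_critical_point by exact hcrit.
  destruct critical_rho as (h0 & h1 & h2).
  unfold vdot, sum3. rewrite h0, h1, h2. cbv [b0vec].
  set (s := splus a b c). set (g := gradnorm2 d1 d2).
  replace (sqrt 6 * s * g * (- (sqrt 6 * s * g) / nu a b c))
    with (- (sqrt 6 * sqrt 6) * s ^ 2 * g ^ 2 / nu a b c) by (field; lra).
  rewrite sqrt_sqrt by lra. field. lra.
Qed.

End CriticalPoint.

Theorem mainTheorem9
  (a b c : R) (ha : 0 < a) (hb : 0 < b) (hc : 0 < c)
  (Omega : R -> R -> Prop) (hopen : open2 Omega) (hbdd : bounded2 Omega)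
  (n0 d1n0 d2n0 : R -> R -> vec)
  (hC1 : C1_S2_on Omega n0 d1n0 d2n0)
  (hne : forall x y, Omega x y -> ~ (forall k, (k < 3)%nat -> n0 x y k = - e3 k))
  (hconf : conformal Omega n0 d1n0 d2n0)
  (Integrable : (R -> R -> R) -> Prop) (I : (R -> R -> R) -> R)
  (hI : IsIntegralOn Omega Integrable I)
  (hL4 : Integrable (fun x y => (gradnorm2 (d1n0 x y) (d2n0 x y)) ^ 2))
  (rho0 : R -> R -> vec)
  (hrho : forall x y, Omega x y -> forall i, (i < 3)%nat ->
     mvec (B0 a b c) (rho0 x y) i
       = - b0vec (splus a b c) (n0 x y) (d1n0 x y) (d2n0 x y) i) :
  (forall x y, Omega x y ->
     rho0 x y 0%nat = 0 /\ rho0 x y 1%nat = 0 /\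
     exists lam, forall i j, (i < 3)%nat -> (j < 3)%nat ->
       mmul (mmul (Rn (n0 x y)) (Vrho (rho0 x y))) (mtr (Rn (n0 x y))) i j
         = lam * (outer (n0 x y) (n0 x y) i j - 1 / 3 * Idm i j)) /\
  I (fun x y =>
       1 / 2 * vdot (mvec (B0 a b c) (rho0 x y)) (rho0 x y)
       + vdot (b0vec (splus a b c) (n0 x y) (d1n0 x y) (d2n0 x y)) (rho0 x y))
  = - (3 * (splus a b c) ^ 2 / nu a b c)
      * I (fun x y => (gradnorm2 (d1n0 x y) (d2n0 x y)) ^ 2).
Proof.
  destruct hC1 as [hunit _].
  destruct hconf as (sigma & hsigma & hd).
  destruct hI as [hlocal hhom].
  assert (hpoint : forall x y, Omega x y ->
    (rho0 x y 0%nat = 0 /\ rho0 x y 1%nat = 0 /\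
     exists lam, forall i j, (i < 3)%nat -> (j < 3)%nat ->
       mmul (mmul (Rn (n0 x y)) (Vrho (rho0 x y))) (mtr (Rn (n0 x y))) i j
         = lam * (outer (n0 x y) (n0 x y) i j - 1 / 3 * Idm i j)) /\
    1 / 2 * vdot (mvec (B0 a b c) (rho0 x y)) (rho0 x y)
      + vdot (b0vec (splus a b c) (n0 x y) (d1n0 x y) (d2n0 x y)) (rho0 x y)
    = - (3 * (splus a b c) ^ 2 / nu a b c) * (gradnorm2 (d1n0 x y) (d2n0 x y)) ^ 2).
  { intros x y hxy.
    specialize (hunit x y hxy); specialize (hne x y hxy).
    specialize (hd x y hxy); specialize (hrho x y hxy).
    destruct (critical_rho a b c _ _ _ _ sigma ha hb hc hunit hne hsigma hd hrho) as (h0 & h1 & _).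
    split; [split; [exact h0 | split; [exact h1 |]] |].
    - exact (critical_uniaxial a b c _ _ _ _ sigma ha hb hc hunit hne hsigma hd hrho).
    - exact (critical_energy a b c _ _ _ _ sigma ha hb hc hunit hne hsigma hd hrho). }
  split.
  - intros x y hxy. exact (proj1 (hpoint x y hxy)).
  - rewrite <- (proj2 (hhom _ _ hL4)).
    apply (proj2 (hlocal _ _ (fun x y hxy => proj2 (hpoint x y hxy)))).
Qed.
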